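(* Let $F(V)$ be the set of formulas of the logic $\mathrm{q}\L^{*}$. For every $p\in F(V)$, if $\vdash p$ (i.e. $p$ is a theorem of $\mathrm{q}\L^{*}$), then $\models p$ (i.e. $p$ is a tautology).
   Context: Let $V=\{p_1,p_2,\ldots\}$ be a set of propositional variables and $F(V)$ the set of formulas built from $V$ and the constant $1$ with the binary connective $\to$ and the unary connectives $\neg$, ${}^{+}$, ${}^{-}$ (postfix ${}^+,{}^-$ bind tighter than $\neg$, which binds tighter than $\to$). Abbreviations: $p\vee q:=((p^{+}\to q^{+})^{+}\to(\neg p)^{-})\to((q^{-}\to p^{-})^{-}\to p^{-})$; an axiom written $A\leftrightarrow B$ stands for the two axioms $A\to B$ and $B\to A$. Axiom schemas of $\mathrm{q}\L^{*}$ (for all formulas $p,q,r$): (Q1) $(p\to q)\leftrightarrow(\neg q\to\neg p)$; (Q2) $1\leftrightarrow((1\to p)\to 1)$; (Q3) $p\leftrightarrow((q\to q)\to p)$; (Q4) $(p\to q)\leftrightarrow((q^{+}\to p^{-})\to(p^{+}\to q^{-}))$; (Q5) $\neg(p\to q)\leftrightarrow(q\to p)$; (Q6) $(p\to(\neg p\to q))^{+}\leftrightarrow(p^{+}\to(\neg p^{+}\to q^{+}))$; (Q7) $(p\to(q\vee r))\leftrightarrow((p\to r)\vee(p\to q))$; (Q8) $(p\vee(q\vee r))\leftrightarrow((p\vee q)\vee r)$; (Q9) $((p\to 1)\to((q\to 1)\to r))\to((q\to 1)\to((p\to 1)\to r))$; (Q10) $p\to 1$; (Q11) $((1\to 1)\to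 p^{+})\leftrightarrow((p\to 1)\to 1)$ and $((1\to 1)\to p^{-})\leftrightarrow((p\to\neg 1)\to\neg 1)$. Deduction rules: (R1) from $p$ and $p\to q$ infer $(r\to r)\to q$; (R2) from $(r\to r)\to(p\to q)$ infer $p\to q$; (R3) from $p\to q$ and $r\to t$ infer $(q\to r)\to(p\to t)$. A proof of $q_n$ is a finite sequence $q_1,\dots,q_n$ each of which is an axiom or obtained from earlier members by a rule; then we write $\vdash q_n$. A valuation is a map $v^{*}:F(V)\to[-1,1]\times[-1,1]$ such that for all $p,q$, writing $v^{*}(p)=\langle a,b\rangle$ and $v^{*}(q)=\langle c,d\rangle$: $v^{*}(1)=\langle 1,0\rangle$; $v^{*}(\neg p)=\langle -a,-b\rangle$; $v^{*}(p\to q)=\langle\min\{1,\max\{-1,c-a\}\},0\rangle$; $v^{*}(p^{+})=\langle\max\{0,a\},b\rangle$ and $v^{*}(p^{-})=\langle\min\{0,a\},b\rangle$. A formula $p$ is a tautology, written $\models p$, if $v^{*}(p)\in[0,1]\times[0,1]$ for every valuation $v^{*}$. *)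

From Stdlib Require Import Reals.
Open Scope R_scope.

Inductive form : Type :=
  | Var : nat -> form
  | One : form
  | Imp : form -> form -> form
  | Neg : form -> form
  | Pls : form -> form
  | Mns : form -> form.

Definition Or (p q : form) : form :=
  Imp (Imp (Pls (Imp (Pls p) (Pls q))) (Mns (Neg p)))
      (Imp (Mns (Imp (Mns q) (Mns p))) (Mns p)).

(* IsAxiom instances of qL*; an axiom A <-> B yields both A -> B and B -> A. *)
Inductive Iff_ax (A B : form) : form -> Prop :=
  | iff_l : Iff_ax A B (Imp A B)
  | iff_r : Iff_ax A B (Imp B A).

Inductive IsAxiom : form -> Prop :=
  | Q1 p q f : Iff_ax (Imp p q) (Imp (Neg q) (Neg p)) f -> IsAxiom f
  | Q2 p f : Iff_ax One (Imp (Imp One p) One) f -> IsAxiom f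
  | Q3 p q f : Iff_ax p (Imp (Imp q q) p) f -> IsAxiom f
  | Q4 p q f :
      Iff_ax (Imp p q) (Imp (Imp (Pls q) (Mns p)) (Imp (Pls p) (Mns q))) f ->
      IsAxiom f
  | Q5 p q f : Iff_ax (Neg (Imp p q)) (Imp q p) f -> IsAxiom f
  | Q6 p q f :
      Iff_ax (Pls (Imp p (Imp (Neg p) q)))
             (Imp (Pls p) (Imp (Neg (Pls p)) (Pls q))) f -> IsAxiom f
  | Q7 p q r f :
      Iff_ax (Imp p (Or q r)) (Or (Imp p r) (Imp p q)) f -> IsAxiom f
  | Q8 p q r f : Iff_ax (Or p (Or q r)) (Or (Or p q) r) f -> IsAxiom f
  | Q9 p q r :
      IsAxiom (Imp (Imp (Imp p One) (Imp (Imp q One) r))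
                 (Imp (Imp q One) (Imp (Imp p One) r)))
  | Q10 p : IsAxiom (Imp p One)
  | Q11a p f :
      Iff_ax (Imp (Imp One One) (Pls p)) (Imp (Imp p One) One) f -> IsAxiom f
  | Q11b p f :
      Iff_ax (Imp (Imp One One) (Mns p)) (Imp (Imp p (Neg One)) (Neg One)) f ->
      IsAxiom f.

(* |- p : p is the last member of a proof (finite sequence of axioms and
   rule applications); equivalently, the least set closed under: *)
Inductive Provable : form -> Prop :=
  | P_ax p : IsAxiom p -> Provable p
  | P_R1 p q r : Provable p -> Provable (Imp p q) -> Provable (Imp (Imp r r) q)
  | P_R2 p q r : Provable (Imp (Imp r r) (Imp p q)) -> Provable (Imp p q)
  | P_R3 p q r t : Provable (Imp p q) -> Provable (Imp r t) ->
                   Provable (Imp (Imp q r) (Imp p t)).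

Definition in_unit (x : R) : Prop := -1 <= x <= 1.

Definition valuation (v : form -> R * R) : Prop :=
  (forall p, in_unit (fst (v p)) /\ in_unit (snd (v p))) /\
  v One = (1, 0) /\
  (forall p, v (Neg p) = (- fst (v p), - snd (v p))) /\
  (forall p q, v (Imp p q) =
      (Rmin 1 (Rmax (-1) (fst (v q) - fst (v p))), 0)) /\
  (forall p, v (Pls p) = (Rmax 0 (fst (v p)), snd (v p))) /\
  (forall p, v (Mns p) = (Rmin 0 (fst (v p)), snd (v p))).

Definition tautology (p : form) : Prop :=
  forall v, valuation v ->
    (0 <= fst (v p) <= 1) /\ (0 <= snd (v p) <= 1).

(* The first coordinate of
   p -> q is the difference of first coordinates clamped to [-1, 1], and its
   second coordinate is 0, so p -> q is a tautology exactly when every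
   valuation gives p a first coordinate at most that of q.  Under every
   valuation the two sides of each axiom A <-> B get the same first
   coordinate (the disjunction is the maximum), which leaves a case analysis
   on min and max.  The rules preserve tautologies because r -> r gets value
   0 and clamping is monotone. *)
From Stdlib Require Import Reals Lra.
Open Scope R_scope.

Definition clamp (x : R) : R := Rmin 1 (Rmax (-1) x).

Lemma Rmax_cases a b : (a <= b /\ Rmax a b = b) \/ (b < a /\ Rmax a b = a).
Proof. unfold Rmax; destruct (Rle_dec a b); lra. Qed.

Lemma Rmin_cases a b : (a <= b /\ Rmin a b = a) \/ (b < a /\ Rmin a b = b).
Proof. unfold Rmin; destruct (Rle_dec a b); lra. Qed.

Ltac no_minmax t :=
  lazymatch t with
  | context [Rmax _ _] => fail
  | context [Rmin _ _] => fail
  | _ => idtac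
  end.

(* Splitting innermost occurrences first keeps the case hypotheses free of
   [Rmax]/[Rmin], so [lra] can prune infeasible branches at once. *)
Ltac lra_minmax :=
  repeat match goal with
  | |- context [Rmax ?a ?b] => no_minmax a; no_minmax b;
      let E := fresh in
      destruct (Rmax_cases a b) as [[? E] | [? E]]; rewrite E; clear E;
      try (intros; exfalso; lra)
  | |- context [Rmin ?a ?b] => no_minmax a; no_minmax b;
      let E := fresh in
      destruct (Rmin_cases a b) as [[? E] | [? E]]; rewrite E; clear E;
      try (intros; exfalso; lra)
  end; intros; lra.

Lemma clamp_ge0 x : 0 <= clamp x <-> 0 <= x.
Proof. unfold clamp; split; lra_minmax. Qed.

Lemma clamp_le1 x : clamp x <= 1.
Proof. apply Rmin_l. Qed.

Lemma clamp_le x y : x <= y -> clamp x <= clamp y.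
Proof. intro; apply Rle_min_compat_l, Rle_max_compat_l; assumption. Qed.

Section Valuation.

Variable v : form -> R * R.
Hypothesis Hv : valuation v.

Lemma fst_in_unit p : -1 <= fst (v p) <= 1.
Proof. apply (proj1 Hv). Qed.

Lemma fst_Imp p q : fst (v (Imp p q)) = clamp (fst (v q) - fst (v p)).
Proof. now rewrite (proj1 (proj2 (proj2 (proj2 Hv)))). Qed.

Lemma snd_Imp p q : snd (v (Imp p q)) = 0.
Proof. now rewrite (proj1 (proj2 (proj2 (proj2 Hv)))). Qed.

Lemma fst_Imp_refl r : fst (v (Imp r r)) = 0.
Proof.
  rewrite fst_Imp, Rminus_diag; unfold clamp.
  rewrite Rmax_right, Rmin_right; lra.
Qed.

Lemma fst_Or p q : fst (v (Or p q)) = Rmax (fst (v p)) (fst (v q)).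
Proof.
  destruct Hv as [_ [_ [HN [HI [HP HM]]]]].
  unfold Or; repeat progress rewrite ?HI, ?HP, ?HM, ?HN; cbn.
  pose proof (fst_in_unit p); pose proof (fst_in_unit q).
  unfold clamp; lra_minmax.
Qed.

End Valuation.

Lemma tautology_Imp A B :
  tautology (Imp A B) <-> forall v, valuation v -> fst (v A) <= fst (v B).
Proof.
  split; intros H v Hv.
  - destruct (H v Hv) as [[H0 _] _].
    rewrite fst_Imp, clamp_ge0 in H0 by assumption; lra.
  - rewrite fst_Imp, snd_Imp by assumption.
    pose proof (H v Hv); pose proof (clamp_le1 (fst (v B) - fst (v A))).
    rewrite clamp_ge0; lra.
Qed.

Lemma tautology_Iff_ax A B f :
  Iff_ax A B f -> (forall v, valuation v -> fst (v A) = fst (v B)) ->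
  tautology f.
Proof.
  intros [] E; apply tautology_Imp; intros v Hv; rewrite (E v Hv); lra.
Qed.

Ltac solve_valuation v Hv :=
  let H1 := fresh in let HN := fresh in let HI := fresh in
  let HP := fresh in let HM := fresh in
  pose proof Hv as [_ [H1 [HN [HI [HP HM]]]]];
  repeat progress rewrite ?(fst_Or v Hv), ?HI, ?HP, ?HM, ?HN, ?H1;
  cbn; unfold clamp;
  repeat match goal with
  | |- context [fst (v ?p)] =>
      let x := fresh "x" in
      pose proof (fst_in_unit v Hv p);
      set (x := fst (v p)) in *; clearbody x
  end;
  lra_minmax.

Lemma IsAxiom_tautology f : IsAxiom f -> tautology f.
Proof.
  intros []; first
    [ eapply tautology_Iff_ax; [eassumption | intros v Hv; solve_valuation v Hv]
    | apply tautology_Imp; intros v Hv; solve_valuation v Hv ].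
Qed.

Lemma tautology_R1 p q r :
  tautology p -> tautology (Imp p q) -> tautology (Imp (Imp r r) q).
Proof.
  intros Hp Hpq; apply tautology_Imp; intros v Hv.
  rewrite fst_Imp_refl by assumption.
  destruct (Hp v Hv) as [[Hp0 _] _].
  pose proof (proj1 (tautology_Imp p q) Hpq v Hv); lra.
Qed.

Lemma tautology_R2 p q r :
  tautology (Imp (Imp r r) (Imp p q)) -> tautology (Imp p q).
Proof.
  intros H; apply tautology_Imp; intros v Hv.
  pose proof (proj1 (tautology_Imp _ _) H v Hv) as Hpq.
  rewrite fst_Imp_refl, fst_Imp, clamp_ge0 in Hpq by assumption; lra.
Qed.

Lemma tautology_R3 p q r t :
  tautology (Imp p q) -> tautology (Imp r t) ->
  tautology (Imp (Imp q r) (Imp p t)).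
Proof.
  intros Hpq Hrt; apply tautology_Imp; intros v Hv.
  pose proof (proj1 (tautology_Imp p q) Hpq v Hv).
  pose proof (proj1 (tautology_Imp r t) Hrt v Hv).
  rewrite !fst_Imp by assumption; apply clamp_le; lra.
Qed.

Theorem proposition5p6 : forall p : form, Provable p -> tautology p.
Proof.
  induction 1.
  - now apply IsAxiom_tautology.
  - now apply tautology_R1 with p.
  - now apply tautology_R2 with r.
  - now apply tautology_R3.
Qed.
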